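(* Let $\Sigma=(X,U_c,\phi)$ be a control system (in the sense defined in the context) satisfying the standing assumptions: (a) $U_c=BC(\mathbb{R}_{\geq 0};U)$; (b) $0$ is the unique equilibrium point of $\Sigma$; (c) $\Sigma$ is forward-complete. If $\Sigma$ admits an FTISS Lyapunov functional, then $\Sigma$ is finite-time input-to-state stable (FTISS), i.e., there exist $\beta\in\mathcal{GKL}$ and $\gamma\in\mathcal{K}$ such that $$\|\phi(t,x,u)\|_X\leq \beta(\|x\|_X,t)+\gamma(\|u\|_{U_c})\quad\text{for all }(t,x,u)\in\mathbb{R}_{\geq 0}\times X\times U_c.$$
   Context: $\mathbb{R}_{\geq 0}=[0,\infty)$, $\mathbb{R}_{>0}=(0,\infty)$. $BC(\mathbb{R}_{\geq 0};U)$ is the set of continuous $u:\mathbb{R}_{\geq0}\to U$ with $\|u\|_{U_c}:=\sup_{s\geq 0}\|u(s)\|_U<\infty$. Control system: $X$, $U$ are Banach spaces, $U_c\subset\{u:\mathbb{R}_{\geq0}\to U\}$ is a normed vector space such that (i) for all $u\in U_c$, $\tau\geq 0$, the shift $u(\cdot+\tau)\in U_c$ with $\|u(\cdot+\tau)\|_{U_c}\le\|u\|_{U_c}$; (ii) for $u_1,u_2\in U_c$ and $t>0$, the concatenation equal to $u_1(\tau)$ for $\tau\in[0,t]$ and $u_2(\tau-t)$ otherwise belongs to $U_c$. The transition map $\phi:D_\phi\to X$, $D_\phi\subseteq \mathbb{R}_{\geq0}\times X\times U_c$, satisfies: $\phi(0,x,u)=x$; causality ($\phi(t,x,\tilde u)=\phi(t,x,u)$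 whenever $\tilde u=u$ on $[0,t]$); $t\mapsto\phi(t,x,u)$ is continuous; cocycle property $\phi(h,\phi(t,x,u),u(t+\cdot))=\phi(t+h,x,u)$. Forward-complete means $\phi(t,x,u)$ is well defined for every $(t,x,u)\in\mathbb{R}_{\geq0}\times X\times U_c$. Equilibrium point $0$: $\phi(t,0,0)=0$ for all $t\ge 0$. Comparison functions: $\mathcal{K}$ = continuous strictly increasing $\gamma:\mathbb{R}_{\geq0}\to\mathbb{R}_{\geq0}$ with $\gamma(0)=0$; $\mathcal{K}_\infty$ = unbounded functions in $\mathcal{K}$. $\beta:\mathbb{R}_{\geq0}\times\mathbb{R}_{\geq0}\to\mathbb{R}_{\geq0}$ is in $\mathcal{GKL}$ if it is continuous, $s\mapsto\beta(s,0)$ is in $\mathcal{K}$, and for each fixed $s$ the map $t\mapsto\beta(s,t)$ is continuous, decreases to zero, and there is a nonnegative continuous function $T(s)$ with $\beta(s,t)=0$ for all $t\geq T(s)$. Lie derivative: for $x\in X$, $u\in U_c$ and $V$ defined near $x$, $\dot V_u(x):=\limsup_{t\to0^+}\frac{V(\phi(t,x,u))-V(x)}{t}$. FTISS Lyapunov functional: a continuous $V:X\to\mathbb{R}_{\geq0}$ for which there exist $M>0$, $\sigma_0\in(0,1)$, $\alpha_1,\alpha_2\in\mathcal{K}_\infty$, $\chi\in\mathcal{K}$ with $\alpha_1(\|x\|_X)\le V(x)\le\alpha_2(\|x\|_X)$ for all $x\in X$, and for all $u\in U_c$: $\|x\|_X\geq\chi(\|u\|_{U_c})\Rightarrow \dot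 V_u(x)\leq -MV^{\sigma_0}(x)$. *)

From HB Require Import structures.
From mathcomp Require Import all_boot all_order all_algebra.
From mathcomp Require Import all_classical all_reals all_analysis.
Set Implicit Arguments. Unset Strict Implicit. Unset Printing Implicit Defensive.
Import Order.TTheory GRing.Theory Num.Theory.
Import numFieldNormedType.Exports.
Local Open Scope classical_set_scope.
Local Open Scope ring_scope.

Section Defs.
Context {R : realType}.

Definition Rge0 : set R := [set s | 0 <= s].

(** comparison functions, as functions on R considered on [0,oo) *)
Definition class_K (g : R -> R) : Prop :=
  {within Rge0, continuous g} /\
  {in Rge0 &, forall a b, a < b -> g a < g b} /\
  g 0 = 0.

Definition class_Kinf (g : R -> R) : Prop :=
  class_K g /\ (forall M : R, exists s, 0 <= s /\ M < g s).

Definition class_GKL (b : R -> R -> R) : Prop :=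
  {within [set p : R * R | 0 <= p.1 /\ 0 <= p.2], continuous (fun p => b p.1 p.2)} /\
  (forall s t, 0 <= s -> 0 <= t -> 0 <= b s t) /\
  class_K (fun s => b s 0) /\
  (forall s, 0 <= s ->
     {within Rge0, continuous (b s)} /\
     {in Rge0 &, forall t1 t2, t1 <= t2 -> b s t2 <= b s t1} /\
     (b s t @[t --> +oo] --> 0)) /\
  (exists T : R -> R, {within Rge0, continuous T} /\
     (forall s, 0 <= s -> 0 <= T s) /\
     (forall s t, 0 <= s -> T s <= t -> b s t = 0)).

Context {U X : completeNormedModType R}.

(** U_c = BC(R_{>=0}; U): inputs are functions R -> U, only their values on
    [0,oo) matter *)
Definition BC (u : R -> U) : Prop :=
  {within Rge0, continuous u} /\ exists M : R, forall s, 0 <= s -> `|u s| <= M.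

Definition BCnorm (u : R -> U) : R := sup [set `|u s| | s in Rge0].

(** forward-complete control system with input space BC: phi is total *)
Definition control_system (phi : R -> X -> (R -> U) -> X) : Prop :=
  (forall x u, BC u -> phi 0 x u = x) /\
  (forall t x u v, 0 <= t -> BC u -> BC v ->
     (forall s, 0 <= s <= t -> u s = v s) -> phi t x u = phi t x v) /\
  (forall x u, BC u -> {within Rge0, continuous (fun t => phi t x u)}) /\
  (forall t h x u, 0 <= t -> 0 <= h -> BC u ->
     phi h (phi t x u) (fun s => u (t + s)) = phi (t + h) x u).

Definition zero_input : R -> U := fun _ => 0.

Definition equilibrium (phi : R -> X -> (R -> U) -> X) (x : X) : Prop :=
  forall t, 0 <= t -> phi t x zero_input = x.

Definition unique_equilibrium_0 (phi : R -> X -> (R -> U) -> X) : Prop :=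
  equilibrium phi 0 /\ (forall x, equilibrium phi x -> x = 0).

Definition lie_deriv (phi : R -> X -> (R -> U) -> X) (V : X -> R)
    (u : R -> U) (x : X) : \bar R :=
  limf_esup (fun t : R => ((V (phi t x u) - V x) / t)%:E) (0^'+).

Definition FTISS_Lyapunov (phi : R -> X -> (R -> U) -> X) (V : X -> R) : Prop :=
  continuous V /\ (forall x, 0 <= V x) /\
  exists (M sigma0 : R) (a1 a2 chi : R -> R),
    0 < M /\ 0 < sigma0 < 1 /\ class_Kinf a1 /\ class_Kinf a2 /\ class_K chi /\
    (forall x, a1 `|x| <= V x <= a2 `|x|) /\
    (forall u x, BC u -> chi (BCnorm u) <= `|x| ->
       (lie_deriv phi V u x <= (- (M * (V x) `^ sigma0))%:E)%E).

Definition FTISS (phi : R -> X -> (R -> U) -> X) : Prop :=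
  exists b g, class_GKL b /\ class_K g /\
    forall t x u, 0 <= t -> BC u ->
      `|phi t x u| <= b `|x| t + g (BCnorm u).

End Defs.

From HB Require Import structures.
From mathcomp Require Import all_boot all_order all_algebra.
From mathcomp Require Import all_classical all_reals all_analysis.
From mathcomp Require Import ring lra.
Set Implicit Arguments. Unset Strict Implicit. Unset Printing Implicit Defensive.
Import Order.TTheory GRing.Theory Num.Theory.
Import numFieldNormedType.Exports.
Local Open Scope classical_set_scope.
Local Open Scope ring_scope.

(* Along a trajectory, whenever V exceeds a2 (chi |u|) the state lies outside the
   ball of radius chi |u|, so the upper Dini derivative of V is at most - M V^sg and
   that of V^(1-sg) is at most - M (1-sg).  Hence V reaches the sublevel set
   {V <= a2 (chi |u|)} no later than V(x)^(1-sg) / (M (1-sg)) and never leaves it: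
     V (phi t x u) <= max (a2 (chi |u|)) ((V x^(1-sg) - M (1-sg) t)_+^(1/(1-sg))).
   Applying a1^-1 and bounding the max by the sum gives the estimate with
   beta s t = a1^-1 (((a2 s)^(1-sg) - M (1-sg) t)_+^(1/(1-sg))), which vanishes after
   a finite time, and gamma = a1^-1 o a2 o chi. *)

Section comparison_functions.
Context {R : realType}.
Implicit Types (a f g : R -> R) (p s t y z : R).

Lemma continuous_dist_ltP (V : normedModType R) (f : R -> V) :
  continuous f <-> (forall x e, 0 < e ->
    exists2 d, 0 < d & forall y, `|x - y| < d -> `|f x - f y| < e).
Proof.
split=> [cf x e e0 | cf x].
  have /cvgrPdist_lt/(_ e e0)[d /= d0 fd] := cf x.
  by exists d => // y; apply: fd.
apply/cvgrPdist_lt => e /(cf x)[d d0 fd].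
by exists d => //= y; apply: fd.
Qed.

Lemma Rge0_max0 s : Rge0 (Num.max s 0).
Proof. by rewrite /Rge0 /= le_max lexx orbT. Qed.

Lemma max0_continuous : continuous (fun s : R => Num.max s 0).
Proof. by move=> x; exact: continuous_max (@cvg_id _ _) (cvg_cst _). Qed.

Lemma continuous_max0 (T : topologicalType) (f : R -> T) :
  {within Rge0, continuous f} -> continuous (fun s : R => f (Num.max s 0)).
Proof.
move=> /subspace_continuousP cf x.
apply: cvg_trans (cf _ (Rge0_max0 x)) => P /= hP.
move: (max0_continuous hP); rewrite !nbhs_simpl /=.
by apply: filterS => s /=; apply; exact: Rge0_max0.
Qed.

Lemma within_Rge0_comp f g : (forall s, 0 <= s -> 0 <= f s) ->
  {within Rge0, continuous f} -> {within Rge0, continuous g} ->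
  {within Rge0, continuous (g \o f)}.
Proof.
move=> f0 cf /continuous_max0 cg.
apply: (@subspace_eq_continuous _ _ _ ((fun y => g (Num.max y 0)) \o f)).
  by move=> s; rewrite inE => /f0 fs0 /=; rewrite (max_idPl fs0).
by apply: within_continuous_comp => // y _; exact: cg.
Qed.

Lemma dist_max0_le y z : `|Num.max y 0 - Num.max z 0| <= `|y - z|.
Proof.
have yz := ler_norm (y - z); have zy := ler_norm (z - y); rewrite distrC in zy.
by rewrite ler_norml; case: (leP y 0) => hy; case: (leP z 0) => hz;
  apply/andP; split; lra.
Qed.

Lemma powR_le_tangent p x y : 0 < p -> p < 1 -> 0 < x -> 0 <= y ->
  y `^ p <= x `^ p + p * x `^ (p - 1) * (y - x).
Proof.
move=> p0 p1 x0 y0.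
have q0 : 0 < 1 - p by lra.
have B0 : 0 < x `^ (1 - p) by apply: powR_gt0.
(* Young's inequality with exponents 1/p and 1/(1-p) *)
have := @conjugate_powR R (y `^ p) (x `^ (1 - p)) p^-1 (1 - p)^-1
  (powR_ge0 _ _) (ltW B0) ltac:(by rewrite invr_gt0) ltac:(by rewrite invr_gt0)
  ltac:(rewrite !invrK; lra).
rewrite -!powRrM !mulfV ?gt_eqF // (powRr1 y0) (powRr1 (ltW x0)) !invrK => H.
rewrite -(ler_pM2r B0).
have xx : x `^ p * x `^ (1 - p) = x.
  by rewrite -powRD ?(gt_eqF x0) ?implybT // addrC subrK powRr1 // ltW.
have x1 : x `^ (p - 1) * x `^ (1 - p) = 1.
  by rewrite -powRD ?(gt_eqF x0) ?implybT // addrC addrA subrK subrr powRr0.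
have -> : (x `^ p + p * x `^ (p - 1) * (y - x)) * x `^ (1 - p) =
  x `^ p * x `^ (1 - p) + p * (x `^ (p - 1) * x `^ (1 - p)) * (y - x) by ring.
rewrite xx x1; lra.
Qed.

Definition pos_powR p y : R := Num.max y 0 `^ p.

Lemma pos_powR_ge0 p y : 0 <= pos_powR p y.
Proof. exact: powR_ge0. Qed.

Lemma pos_powRE p y : 0 <= y -> pos_powR p y = y `^ p.
Proof. by move=> y0; rewrite /pos_powR (max_idPl y0). Qed.

Lemma pos_powR_npos p y : 0 < p -> y <= 0 -> pos_powR p y = 0.
Proof. by move=> p0 y0; rewrite /pos_powR (max_idPr y0) powR0 // gt_eqF. Qed.

Lemma pos_powR_le p y z : 0 <= p -> y <= z -> pos_powR p y <= pos_powR p z.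
Proof.
move=> p0 yz; apply: ge0_ler_powR; rewrite ?nnegrE ?Rge0_max0 //.
exact: le_max2.
Qed.

Lemma continuous_pos_powR p : 0 < p -> continuous (pos_powR p).
Proof.
move=> p0; apply: (@continuous_max0 _ (fun y => y `^ p)).
have -> : Rge0 = [set` `[(0:R), +oo[].
  by apply/seteqP; split => x; rewrite /Rge0 /= in_itv /= andbT.
apply/continuous_within_itvcyP; split.
  move=> x; rewrite in_itv /= andbT => x0.
  apply: differentiable_continuous; apply/derivable1_diffP.
  by apply: derivable_powR; rewrite in_itv /= x0.
by rewrite powR0 ?gt_eqF //; apply: powR_cvg0.
Qed.

Lemma class_K_ge0 a : class_K a -> forall s, 0 <= s -> 0 <= a s.
Proof.
move=> [_ [ha a0]] s; rewrite le_eqVlt => /predU1P[<-|s0]; first by rewrite a0.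
by rewrite -a0 ltW // ha // inE /Rge0 /= ?lexx // ltW.
Qed.

Lemma class_K_lt a : class_K a -> forall x y, 0 <= x -> x < y -> a x < a y.
Proof.
move=> [_ [ha _]] x y x0 xy.
by apply: ha; rewrite // inE /Rge0 /= // (le_trans x0 (ltW xy)).
Qed.

Lemma class_K_leE a : class_K a -> forall x y, 0 <= x -> 0 <= y ->
  (a x <= a y) = (x <= y).
Proof.
move=> Ka x y x0 y0; apply/idP/idP => [axy|].
  by rewrite leNgt; apply/negP => /(class_K_lt Ka y0); rewrite ltNge axy.
by rewrite le_eqVlt => /predU1P[->//|/(class_K_lt Ka x0)/ltW].
Qed.

Lemma class_K_eq a b : {in Rge0, a =1 b} -> class_K a -> class_K b.
Proof.
move=> ab [ca [ha a0]]; split; [|split].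
- exact: subspace_eq_continuous ab ca.
- by move=> x y x0 y0; rewrite -!ab //; exact: ha.
- by rewrite -ab // inE /Rge0 /=.
Qed.

Lemma class_K_comp f g : class_K f -> class_K g -> class_K (g \o f).
Proof.
move=> Kf Kg; split; [|split].
- exact: within_Rge0_comp (class_K_ge0 Kf) Kf.1 Kg.1.
- move=> x y; rewrite !inE /Rge0 /= => x0 y0 xy.
  by apply: (class_K_lt Kg); [exact: class_K_ge0 | exact: class_K_lt].
- by rewrite /= Kf.2.2 Kg.2.2.
Qed.

Definition Kinf_inv a y : R := xget 0 [set s | 0 <= s /\ a s = Num.max y 0].

Lemma Kinf_inv_spec a : class_Kinf a -> forall y,
  0 <= Kinf_inv a y /\ a (Kinf_inv a y) = Num.max y 0.
Proof.
move=> [[ca [_ a0]] a_unbounded] y.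
suff : exists s, 0 <= s /\ a s = Num.max y 0 by move=> /(xgetPex 0).
have [S [S0 aS]] := a_unbounded (Num.max y 0).
have cS : {within `[0, S], continuous a}.
  by apply: continuous_subspaceW ca => x /=; rewrite in_itv /= => /andP[].
have [|s] := IVT S0 cS (v := Num.max y 0).
  by rewrite a0 ge_min (Rge0_max0 y : 0 <= _) /= le_max (ltW aS) orbT.
by rewrite in_itv /= => /andP[s0 _] as_; exists s.
Qed.

Lemma Kinf_inv_ge0 a : class_Kinf a -> forall y, 0 <= Kinf_inv a y.
Proof. by move=> Ka y; case: (Kinf_inv_spec Ka y). Qed.

Lemma Kinf_invK a : class_Kinf a -> forall y, 0 <= y -> a (Kinf_inv a y) = y.
Proof. by move=> Ka y y0; case: (Kinf_inv_spec Ka y) => _ ->; apply/max_idPl. Qed.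

Lemma Kinf_inv_le a : class_Kinf a -> forall y z, y <= z ->
  Kinf_inv a y <= Kinf_inv a z.
Proof.
move=> Ka y z yz; rewrite -(class_K_leE Ka.1) ?Kinf_inv_ge0 //.
by case: (Kinf_inv_spec Ka y) => _ ->; case: (Kinf_inv_spec Ka z) => _ ->; exact: le_max2.
Qed.

Lemma Kinf_inv_lt a : class_Kinf a -> forall y z, 0 <= y -> y < z ->
  Kinf_inv a y < Kinf_inv a z.
Proof.
move=> Ka y z y0 yz; rewrite ltNge -(class_K_leE Ka.1) ?Kinf_inv_ge0 //.
by rewrite !Kinf_invK // -?ltNge // (le_trans y0 (ltW yz)).
Qed.

Lemma le_Kinf_inv a : class_Kinf a -> forall s y, 0 <= s -> a s <= y ->
  s <= Kinf_inv a y.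
Proof.
move=> Ka s y s0 asy; have y0 := le_trans (class_K_ge0 Ka.1 s0) asy.
by rewrite -(class_K_leE Ka.1) ?Kinf_inv_ge0 // Kinf_invK.
Qed.

Lemma Kinf_inv0 a : class_Kinf a -> Kinf_inv a 0 = 0.
Proof.
move=> Ka; apply/le_anti; rewrite Kinf_inv_ge0 // andbT.
by rewrite -(class_K_leE Ka.1) ?Kinf_inv_ge0 // Kinf_invK // Ka.1.2.2.
Qed.

Lemma Kinf_inv_max a : class_Kinf a -> forall y z,
  Kinf_inv a (Num.max y z) <= Kinf_inv a y + Kinf_inv a z.
Proof.
move=> Ka y z; have y0 := Kinf_inv_ge0 Ka y; have z0 := Kinf_inv_ge0 Ka z.
by case: (leP y z) => _; [rewrite lerDr | rewrite lerDl].
Qed.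

Lemma continuous_Kinf_inv a : class_Kinf a -> continuous (Kinf_inv a).
Proof.
move=> Ka; apply/continuous_dist_ltP => y0 e e0.
set s0 := Kinf_inv a y0.
have s00 : 0 <= s0 by apply: Kinf_inv_ge0.
have as0 : a s0 = Num.max y0 0 by case: (Kinf_inv_spec Ka y0).
have d10 : 0 < a (s0 + e) - a s0.
  by rewrite subr_gt0; apply: (class_K_lt Ka.1) => //; lra.
(* a moves by at least d when its argument moves by e, so Kinf_inv moves by less than e *)
have key d : 0 < d -> d <= a (s0 + e) - a s0 ->
    (e <= s0 -> d <= a s0 - a (s0 - e)) ->
    forall y, `|y0 - y| < d -> `|s0 - Kinf_inv a y| < e.
  move=> d0 hd1 hd2 y yd.
  have : `|Num.max y 0 - Num.max y0 0| < d.
    by apply: le_lt_trans (dist_max0_le y y0) _; rewrite distrC.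
  rewrite ltr_norml => /andP[h1 h2].
  have [y1 ay] := Kinf_inv_spec Ka y.
  have up : Kinf_inv a y < s0 + e.
    by rewrite ltNge -(class_K_leE Ka.1) ?ay; lra.
  have lo : s0 - e < Kinf_inv a y.
    case: (leP e s0) => es; last by lra.
    by rewrite ltNge -(class_K_leE Ka.1) ?ay; have := hd2 es; lra.
  by rewrite ltr_norml; apply/andP; split; lra.
case: (leP e s0) => es; last by exists (a (s0 + e) - a s0) => //; apply: key => //; lra.
have d20 : 0 < a s0 - a (s0 - e).
  by rewrite subr_gt0; apply: (class_K_lt Ka.1); lra.
exists (Num.min (a (s0 + e) - a s0) (a s0 - a (s0 - e))); first by rewrite lt_min d10 d20.
by apply: key; rewrite ?lt_min ?d10 ?d20 // ?ge_min ?lexx ?orbT.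
Qed.

Lemma class_K_Kinf_inv a : class_Kinf a -> class_K (Kinf_inv a).
Proof.
move=> Ka; split; [|split].
- exact/continuous_subspaceT/continuous_Kinf_inv.
- by move=> x y; rewrite inE /Rge0 /= => x0 _; exact: Kinf_inv_lt.
- exact: Kinf_inv0.
Qed.

End comparison_functions.

Section upper_dini.
Context {R : realType}.
Implicit Types (v w : R -> R).

Definition upper_dini_le w (t r : R) : Prop :=
  forall eta, 0 < eta -> exists2 del, 0 < del &
    forall h, 0 < h -> h < del -> w (t + h) <= w t + (r + eta) * h.

Lemma upper_dini_le_eq w1 w2 (t1 t2 r : R) :
  (forall h, 0 <= h -> w1 (t1 + h) = w2 (t2 + h)) ->
  upper_dini_le w1 t1 r -> upper_dini_le w2 t2 r.
Proof.
move=> w12 dw eta /dw[del del0 hdel]; exists del => // h h0 hd.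
have w0 := w12 0 (lexx 0); rewrite !addr0 in w0.
by rewrite -w0 -w12; [exact: hdel | exact: ltW].
Qed.

Lemma upper_dini_leW w (t r r' : R) : r <= r' ->
  upper_dini_le w t r -> upper_dini_le w t r'.
Proof.
move=> rr' dw eta /dw[del del0 hdel]; exists del => // h h0 hd.
by apply: le_trans (hdel h h0 hd) _; rewrite lerD2l ler_wpM2r ?lerD2r // ltW.
Qed.

Lemma upper_dini_le_addl w (t r c : R) : upper_dini_le w t r ->
  upper_dini_le (fun s => w s + c * s) t (r + c).
Proof.
move=> dw eta /dw[del del0 hdel]; exists del => // h h0 hd.
by move: (hdel h h0 hd); rewrite !mulrDl mulrDr; lra.
Qed.

Lemma upper_dini_le_powR w (t r p : R) : 0 < p -> p < 1 -> 0 < w t ->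
  (forall h, 0 < h -> 0 <= w (t + h)) -> upper_dini_le w t r ->
  upper_dini_le (fun s => w s `^ p) t (p * w t `^ (p - 1) * r).
Proof.
move=> p0 p1 wt0 w0 dw eta eta0.
set c := p * w t `^ (p - 1).
have c0 : 0 < c by rewrite mulr_gt0 // powR_gt0.
have [del del0 hdel] := dw (eta / c) (divr_gt0 eta0 c0).
exists del => // h h0 hd.
apply: le_trans (powR_le_tangent p0 p1 wt0 (w0 h h0)) _.
have : c * (w (t + h) - w t) <= c * ((r + eta / c) * h).
  by rewrite ler_pM2l //; have := hdel h h0 hd; lra.
have -> : c * ((r + eta / c) * h) = (c * r + eta) * h by field; rewrite gt_eqF.
rewrite -/c; lra.
Qed.

Lemma sup_le_barrier w g (S : set R) : continuous w -> {homo g : x y / x <= y} ->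
  has_sup S -> (forall s, S s -> w s <= g s) -> w (sup S) <= g (sup S).
Proof.
move=> /continuous_dist_ltP cw g_le supS wS; set s := sup S.
rewrite leNgt; apply/negP => gws.
have [d d0 wd] := cw s (w s - g s) ltac:(by rewrite subr_gt0).
have [t St dt] := sup_adherent d0 supS.
have ts : t <= s by apply: sup_upper_bound.
have := wd t; rewrite ger0_norm ?subr_ge0 // => /(_ ltac:(rewrite -/s in dt; lra)).
by move=> /ltr_normlW; have := wS t St; have := g_le _ _ ts; lra.
Qed.

Lemma lt_barrier_right w g (s b : R) : continuous w -> {homo g : x y / x <= y} ->
  s < b -> w s < g s -> exists2 t, s < t & t <= b /\ w t <= g t.
Proof.
move=> /continuous_dist_ltP cw g_le sb wgs.
have [d d0 wd] := cw s (g s - w s) ltac:(by rewrite subr_gt0).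
pose t := Num.min b (s + d / 2).
have st : s < t by rewrite lt_min sb ltrDl divr_gt0.
have tsd : t <= s + d / 2 by rewrite ge_min lexx orbT.
exists t => //; split; first by rewrite ge_min lexx.
have := wd t; rewrite distrC ger0_norm ?subr_ge0 ?(ltW st) // => /(_ ltac:(lra)).
by rewrite distrC => /ltr_normlW; have := g_le _ _ (ltW st); lra.
Qed.

Lemma upper_dini_sublevel w (a b c : R) : continuous w -> a <= b ->
  (forall t, a <= t -> t < b -> c < w t -> upper_dini_le w t 0) ->
  w a <= c -> w b <= c.
Proof.
move=> cw ab dw wac; rewrite leNgt; apply/negP => cwb.
(* a barrier of positive slope e turns the non-strict Dini bound into a strict push *)
pose e := (w b - c) / (2 * (b - a + 1)).
have e0 : 0 < e by rewrite divr_gt0 ?subr_gt0 // mulr_gt0 //; lra.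
pose g s := c + e * (s - a + 1).
have gb : g b < w b.
  have -> : g b = c + (w b - c) / 2 by rewrite /g /e; field; lra.
  lra.
have g_le : {homo g : x y / x <= y}.
  by move=> s1 s2 s12; rewrite lerD2l ler_pM2l //; lra.
pose S := [set s | a <= s <= b /\ w s <= g s].
have Sa : S a by split; [rewrite lexx ab | rewrite /g subrr add0r mulr1; lra].
have supS : has_sup S by split; [exists a | exists b => y [/andP[_ ->]]].
pose s := sup S.
have as_ : a <= s by apply: sup_upper_bound.
have sb : s <= b by apply: ge_sup; [exists a | move=> y [/andP[_ ->]]].
have ws : w s <= g s by apply: sup_le_barrier => // t [].
have sltb : s < b by rewrite lt_neqAle sb andbT; apply/eqP => sb'; rewrite sb' in ws; lra.
suff [t st St] : exists2 t, s < t & S t.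
  by have := sup_upper_bound supS St; rewrite -/s; lra.
case: (ltP (w s) (g s)) => [wgs | gws].
  have [t st [tb wgt]] := lt_barrier_right cw g_le sltb wgs.
  by exists t => //; split => //; rewrite tb (le_trans as_ (ltW st)).
have cws : c < w s by apply: lt_le_trans gws; rewrite /g ltrDl mulr_gt0 //; lra.
have [del del0 hdel] := dw s as_ sltb cws e e0.
pose m := Num.min (b - s) del.
have m0 : 0 < m by rewrite lt_min subr_gt0 sltb del0.
have mb : m <= b - s by rewrite ge_min lexx.
have mdel : m <= del by rewrite ge_min lexx orbT.
pose h := m / 2.
have h0 : 0 < h by rewrite /h; lra.
have hdel' : h < del by rewrite /h; lra.
exists (s + h); first by rewrite ltrDl.
split; first by apply/andP; split; rewrite /h; lra.
have -> : g (s + h) = g s + e * h by rewrite /g; ring.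
have := hdel h h0 hdel'; rewrite add0r; lra.
Qed.

Lemma upper_dini_powR_decay v (M sg t : R) :
  0 < M -> 0 < sg -> sg < 1 -> continuous v -> (forall s, 0 <= v s) -> 0 <= t ->
  (forall s, 0 <= s -> s < t -> 0 < v s /\ upper_dini_le v s (- (M * v s `^ sg))) ->
  v t `^ (1 - sg) + M * (1 - sg) * t <= v 0 `^ (1 - sg).
Proof.
move=> M0 sg0 sg1 cv v0 t0 dv; set p := 1 - sg.
have p0 : 0 < p by rewrite /p; lra.
have p1 : p < 1 by rewrite /p; lra.
pose W s := v s `^ p + M * p * s.
have cW : continuous W.
  have -> : W = (fun s => pos_powR p (v s) + M * p * s).
    by apply/funext => s; rewrite /W pos_powRE.
  have cpv : continuous (fun s => pos_powR p (v s)).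
    by move=> s; apply: (continuous_comp (cv s)); exact: continuous_pos_powR.
  by move=> s; apply: cvgD; [exact: cpv | exact: mulrl_continuous].
have := upper_dini_sublevel cW t0 _ (lexx (W 0)); rewrite /W mulr0 addr0; apply.
move=> s s0 st _; have [vs0 dvs] := dv s s0 st.
have rate0 : p * v s `^ (p - 1) * - (M * v s `^ sg) + M * p = 0.
  have -> : p * v s `^ (p - 1) * - (M * v s `^ sg) =
    - (M * p) * (v s `^ (p - 1) * v s `^ sg) by ring.
  have exp0 : p - 1 + sg = 0 by rewrite /p; ring.
  by rewrite -powRD ?(gt_eqF vs0) ?implybT // exp0 powRr0; ring.
by rewrite -rate0; apply/upper_dini_le_addl/upper_dini_le_powR.
Qed.

Lemma upper_dini_decay_bound v (th M sg : R) :
  0 < M -> 0 < sg -> sg < 1 -> 0 <= th -> continuous v -> (forall s, 0 <= v s) ->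
  (forall s, 0 <= s -> th < v s -> upper_dini_le v s (- (M * v s `^ sg))) ->
  forall t, 0 <= t ->
  v t <= Num.max th (pos_powR (1 - sg)^-1 (v 0 `^ (1 - sg) - M * (1 - sg) * t)).
Proof.
move=> M0 sg0 sg1 th0 cv v0 dv t t0; rewrite le_max.
have [[tau [tau0 taut vtau]] | above] :=
  pselect (exists tau, [/\ 0 <= tau, tau <= t & v tau <= th]).
  apply/orP; left; apply: (upper_dini_sublevel cv taut _ vtau) => s taus _ ths.
  apply: upper_dini_leW (dv s (le_trans tau0 taus) ths).
  by rewrite oppr_le0 mulr_ge0 ?powR_ge0 // ltW.
apply/orP; right; set p := 1 - sg.
have p0 : 0 < p by rewrite /p; lra.
have vth s : 0 <= s -> s <= t -> th < v s.
  by move=> s0 st; rewrite ltNge; apply/negP => vs; apply: above; exists s.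
have decay : v t `^ p + M * p * t <= v 0 `^ p.
  apply: upper_dini_powR_decay => // s s0 st.
  by have := vth s s0 (ltW st); split; [lra | exact: dv].
have -> : v t = pos_powR p^-1 (v t `^ p).
  by rewrite pos_powRE ?powR_ge0 // -powRrM divff ?gt_eqF // powRr1.
by apply: pos_powR_le; [rewrite invr_ge0 ltW | lra].
Qed.

End upper_dini.

Section class_GKL.
Context {R : realType}.
Implicit Types (a g : R -> R) (p k : R).

Lemma class_GKL_comp g (b : R -> R -> R) : continuous g -> class_K g ->
  class_GKL b -> class_GKL (fun s t => g (b s t)).
Proof.
move=> cg Kg [cb [b0 [Kb0 [bs [T [cT [T0 bT]]]]]]].
split; [|split; [|split; [|split]]].
- by apply: within_continuous_comp cb => z _; exact: cg.
- by move=> s t s0 t0; apply: class_K_ge0 => //; exact: b0.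
- exact: class_K_comp Kb0 Kg.
- move=> s s0; have [cbs [bs_mono bs_lim]] := bs s s0; split; [|split].
  + by apply: within_continuous_comp cbs => y _; exact: cg.
  + move=> t1 t2 t10 t20 t12; move: (t10) (t20); rewrite !inE => t1_ge0 t2_ge0.
    by rewrite class_K_leE ?b0 //; exact: bs_mono.
  + by rewrite -Kg.2.2; apply: continuous_cvg => //; exact: cg.
- by exists T; do 2!split=> //; move=> s t s0 Tt; rewrite bT // Kg.2.2.
Qed.

(* for k = M p this is the solution of y' = - M y^(1-p) starting at a s, stopped at 0 *)
Definition powR_decay a p k s t : R := pos_powR p^-1 (a s `^ p - k * t).

Lemma continuous_powR_decay a p k : class_K a -> 0 < p ->
  {within [set z : R * R | 0 <= z.1 /\ 0 <= z.2],
    continuous (fun z => powR_decay a p k z.1 z.2)}.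
Proof.
move=> Ka p0; pose ae s := a (Num.max s 0).
have cae : continuous (fun s => pos_powR p (ae s)).
  have cmax : continuous ae := continuous_max0 Ka.1.
  by move=> s; apply: (continuous_comp (cmax s)); exact: continuous_pos_powR.
have cin : continuous (fun z : R * R => pos_powR p (ae z.1) - k * z.2).
  move=> z; apply: cvgB.
    by apply: (@continuous_comp _ _ _ fst (fun s => pos_powR p (ae s)));
      [exact: cvg_fst | exact: cae].
  by apply: (@continuous_comp _ _ _ snd ( *%R k));
    [exact: cvg_snd | exact: mulrl_continuous].
apply: (@subspace_eq_continuous _ _ _
  (fun z => pos_powR p^-1 (pos_powR p (ae z.1) - k * z.2))).
  move=> z; rewrite inE => -[z10 _]; have az0 := class_K_ge0 Ka z10.
  by rewrite /from_subspace /powR_decay /ae (max_idPl z10) (pos_powRE p az0).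
apply: continuous_subspaceT => z.
by apply: (continuous_comp (cin z)); apply: continuous_pos_powR; rewrite invr_gt0.
Qed.

Lemma class_GKL_powR_decay a p k : class_K a -> 0 < p -> 0 < k ->
  class_GKL (powR_decay a p k).
Proof.
move=> Ka p0 k0; have a0 := class_K_ge0 Ka.
have ip0 : 0 < p^-1 by rewrite invr_gt0.
pose T s := pos_powR p (a s) / k.
have decay0 s t : 0 <= s -> T s <= t -> powR_decay a p k s t = 0.
  move=> s0 Tt; apply: pos_powR_npos => //.
  by move: Tt; rewrite /T pos_powRE ?a0 // ler_pdivrMr // mulrC; lra.
split; [|split; [|split; [|split]]].
- exact: continuous_powR_decay.
- by move=> s t _ _; exact: pos_powR_ge0.
- apply: class_K_eq Ka => s; rewrite inE => s0.
  rewrite /powR_decay mulr0 subr0 pos_powRE ?powR_ge0 // -powRrM divff ?gt_eqF //.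
  by rewrite powRr1 // a0.
- move=> s s0; split; [|split].
  + have cin : continuous (fun t => a s `^ p - k * t).
      by move=> t; apply: cvgB; [exact: cvg_cst | exact: mulrl_continuous].
    apply: continuous_subspaceT => t.
    by apply: (continuous_comp (cin t)); exact: continuous_pos_powR.
  + move=> t1 t2 _ _ t12; apply: pos_powR_le; first exact: ltW.
    by rewrite lerD2l lerN2 ler_wpM2l // ltW.
  + apply/cvgrPdist_lt => e e0; exists (T s); split; first exact: num_real.
    by move=> t Tt; rewrite decay0 ?subrr ?normr0 // ltW.
- exists T; split; [|split].
  + apply: (@within_continuous_comp _ _ _ Rge0 a (fun y => pos_powR p y / k) _ Ka.1) => y _.
    by apply: cvgMl; exact: continuous_pos_powR.
  + by move=> s _; rewrite divr_ge0 ?pos_powR_ge0 // ltW.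
  + by move=> s t s0; exact: decay0.
Qed.

End class_GKL.

Section bounded_continuous_inputs.
Context {R : realType} {U : completeNormedModType R}.
Implicit Types (u : R -> U) (t : R).

Lemma BC_has_sup u : BC u -> has_sup [set `|u s| | s in Rge0].
Proof.
case=> _ [M uM]; split; first by exists `|u 0|, 0 => //; rewrite /Rge0 /=.
by exists M => _ [s s0 <-]; exact: uM.
Qed.

Lemma BCnorm_ub u s : BC u -> 0 <= s -> `|u s| <= BCnorm u.
Proof. by move=> hu s0; apply: (sup_upper_bound (BC_has_sup hu)); exists s. Qed.

Lemma BCnorm_ge0 u : BC u -> 0 <= BCnorm u.
Proof. by move=> hu; exact: le_trans (BCnorm_ub hu (lexx 0)). Qed.

Lemma BC_shift u t : BC u -> 0 <= t -> BC (fun s => u (t + s)).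
Proof.
move=> [cu [M uM]] t0; split; last by exists M => s s0; apply: uM; rewrite addr_ge0.
have cmax : continuous (fun s : R => u (Num.max s 0)) := continuous_max0 cu.
apply: (@subspace_eq_continuous _ _ _ (fun s : R => u (Num.max (t + s) 0))).
  by move=> s; rewrite inE /Rge0 /= => s0; rewrite (max_idPl (addr_ge0 t0 s0)).
apply: continuous_subspaceT => s; apply: (continuous_comp _ (cmax _)).
by apply: cvgD; [exact: cvg_cst | exact: cvg_id].
Qed.

Lemma BCnorm_shift u t : BC u -> 0 <= t -> BCnorm (fun s => u (t + s)) <= BCnorm u.
Proof.
move=> hu t0; apply: ge_sup; first by exists `|u (t + 0)|, 0 => //; rewrite /Rge0 /=.
by move=> _ [s s0 <-]; apply: BCnorm_ub => //; rewrite addr_ge0.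
Qed.

End bounded_continuous_inputs.

Lemma lie_deriv_upper_dini (R : realType) (U X : completeNormedModType R)
    (phi : R -> X -> (R -> U) -> X) (V : X -> R) u x (L : R) :
  phi 0 x u = x -> (lie_deriv phi V u x <= L%:E)%E ->
  upper_dini_le (fun h => V (phi h x u)) 0 L.
Proof.
move=> phi0 VL eta eta0.
have : (lie_deriv phi V u x < (L + eta)%:E)%E.
  by apply: le_lt_trans VL _; rewrite lte_fin ltrDl.
rewrite /lie_deriv limf_esupE => /ereal_inf_lt[_ [W + <-]] supW.
rewrite /at_right /within => /nbhs_ballP[d /= d0 dW].
exists d => // h h0 hd; rewrite add0r phi0.
have : (((V (phi h x u) - V x) / h)%:E <=
    ereal_sup [set ((V (phi t x u) - V x) / t)%:E | t in W])%E.
  apply: ereal_sup_ubound; exists h => //; apply: dW => //=.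
  by rewrite /ball /= sub0r normrN gtr0_norm.
move=> /le_lt_trans /(_ supW); rewrite lte_fin ltr_pdivrMr //; lra.
Qed.

Section Lyapunov_estimate.
Context {R : realType} {U X : completeNormedModType R}.
Variables (phi : R -> X -> (R -> U) -> X) (V : X -> R) (M sg : R) (a1 a2 chi : R -> R).
Hypotheses (phi_sys : control_system phi) (V_cont : continuous V)
  (V_ge0 : forall x, 0 <= V x) (M_gt0 : 0 < M) (sg_gt0 : 0 < sg) (sg_lt1 : sg < 1)
  (Ka1 : class_Kinf a1) (Ka2 : class_Kinf a2) (Kchi : class_K chi)
  (V_sandwich : forall x, a1 `|x| <= V x <= a2 `|x|)
  (V_lie : forall u x, BC u -> chi (BCnorm u) <= `|x| ->
     (lie_deriv phi V u x <= (- (M * V x `^ sg))%:E)%E).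

Lemma Lyapunov_decay_bound t x u : 0 <= t -> BC u ->
  V (phi t x u) <= Num.max (a2 (chi (BCnorm u)))
    (pos_powR (1 - sg)^-1 (V x `^ (1 - sg) - M * (1 - sg) * t)).
Proof.
move=> t0 hu; have [phi0 [_ [phi_cont cocycle]]] := phi_sys.
have u0 := BCnorm_ge0 hu.
pose v s := V (phi (Num.max s 0) x u).
have vE s : 0 <= s -> v s = V (phi s x u) by move=> s0; rewrite /v (max_idPl s0).
rewrite -vE // -[in V x](phi0 x u hu) -vE //.
apply: upper_dini_decay_bound => //.
- exact/(class_K_ge0 Ka2.1)/(class_K_ge0 Kchi).
- have cmax : continuous (fun s : R => phi (Num.max s 0) x u).
    exact: continuous_max0 (phi_cont x u hu).
  by move=> s; apply: (continuous_comp (cmax s)); exact: V_cont.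
- by move=> s; exact: V_ge0.
- move=> tau tau0; rewrite vE // => above.
  set xt := phi tau x u; have hut := BC_shift hu tau0.
  apply: (@upper_dini_le_eq _ (fun h => V (phi h xt (fun s => u (tau + s)))) _ 0).
    by move=> h h0; rewrite add0r vE ?addr_ge0 // cocycle.
  apply: (lie_deriv_upper_dini (phi0 xt _ hut)).
  apply: V_lie => //; apply: le_trans (_ : chi (BCnorm u) <= _).
    by rewrite class_K_leE ?BCnorm_ge0 //; exact: BCnorm_shift.
  rewrite -(class_K_leE Ka2.1) ?class_K_ge0 //; have := V_sandwich xt.
  by case/andP=> _; lra.
Qed.

Lemma Lyapunov_FTISS_estimate t x u : 0 <= t -> BC u ->
  `|phi t x u| <= Kinf_inv a1 (powR_decay a2 (1 - sg) (M * (1 - sg)) `|x| t)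
                  + (Kinf_inv a1 \o a2 \o chi) (BCnorm u).
Proof.
move=> t0 hu; rewrite addrC.
have p0 : 0 < 1 - sg by rewrite subr_gt0.
have := @Lyapunov_decay_bound t x u t0 hu.
set th := a2 _; set rho := pos_powR _ _ => Vphi.
have rho_le : rho <= powR_decay a2 (1 - sg) (M * (1 - sg)) `|x| t.
  apply: pos_powR_le; first by rewrite invr_ge0 ltW.
  rewrite lerD2r; apply: ge0_ler_powR; rewrite ?nnegrE ?(ltW p0) //.
  - exact: class_K_ge0 Ka2.1 _ (normr_ge0 x).
  - by case/andP: (V_sandwich x).
apply: le_trans (_ : Kinf_inv a1 (Num.max th rho) <= _).
  apply: le_Kinf_inv => //; apply: le_trans Vphi.
  by case/andP: (V_sandwich (phi t x u)).
by apply: le_trans (Kinf_inv_max Ka1 th rho) _; rewrite lerD2l Kinf_inv_le.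
Qed.

End Lyapunov_estimate.

Theorem theorem1 (R : realType) (U X : completeNormedModType R)
  (phi : R -> X -> (R -> U) -> X) :
  control_system phi ->
  unique_equilibrium_0 phi ->
  (exists V : X -> R, FTISS_Lyapunov phi V) ->
  FTISS phi.
Proof.
move=> phi_sys _ [V [V_cont [V_ge0 [M [sg [a1 [a2 [chi
  [M_gt0 [/andP[sg_gt0 sg_lt1] [Ka1 [Ka2 [Kchi [V_sandwich V_lie]]]]]]]]]]]]]].
have p0 : 0 < 1 - sg by lra.
exists (fun s t => Kinf_inv a1 (powR_decay a2 (1 - sg) (M * (1 - sg)) s t)),
  (Kinf_inv a1 \o a2 \o chi); split; [|split].
- apply: class_GKL_comp (continuous_Kinf_inv Ka1) (class_K_Kinf_inv Ka1) _.
  exact: class_GKL_powR_decay (Ka2.1) p0 (mulr_gt0 M_gt0 p0).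
- exact: class_K_comp Kchi (class_K_comp Ka2.1 (class_K_Kinf_inv Ka1)).
- move=> t x u t0 hu.
  exact: (Lyapunov_FTISS_estimate phi_sys V_cont V_ge0 M_gt0 sg_gt0 sg_lt1
    Ka1 Ka2 Kchi V_sandwich V_lie x t0 hu).
Qed.
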